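(* For $k\ge1$, the linear simplex $\beta$ code $\mathcal{S}_k^\beta$ has type $\left(q^{(s-1)(k-1)}\frac{q^k-1}{q-1};k,0,\dots,0\right)$.
   Context: Let $R$ be a finite commutative chain ring with maximal ideal $\langle\gamma\rangle$, nilpotency index $s$ and residue field $R/\langle\gamma\rangle\cong\mathbb{F}_q$. Fix coset representatives $T=\{e_0,\dots,e_{q-1}\}$ with $e_0=0,e_1=1$, ordered $e_0<\dots<e_{q-1}$; each $r\in R$ is uniquely $\sum_{i=0}^{s-1}r_i\gamma^i$, $r_i\in T$; order $R$ by $x>y$ iff $x_i>y_i$ in $T$ for the largest $i$ with $x_i\neq y_i$; list $R=\{\rho_0,\dots,\rho_{q^s-1}\}$ increasingly. $\mathbf{a}^{(m)}$ is the constant vector of length $m$. Define $G_1^\alpha=(\rho_0\ \cdots\ \rho_{q^s-1})$ and, for $k>1$, $G_k^\alpha$ as the matrix of $q^s$ column blocks, the $j$-th having first row $\boldsymbol{\rho_j}^{(q^{s(k-1)})}$ and $G_{k-1}^\alpha$ below. List $\langle\gamma\rangle$ increasingly as $a_0\gamma<\dots<a_{q^{s-1}-1}\gamma$. Define $G_1^\beta=(1)$ and, for $k>1$, $G_k^\beta$ as the matrix with column blocks: first a block with first row $\mathbf{1}^{(q^{s(k-1)})}$ and $G_{k-1}^\alpha$ below; then for each $j=0,\dots,q^{s-1}-1$ a block with first row the constant vector with entry $a_j\gamma$ and $G_{k-1}^\beta$ below. $\mathcal{S}_k^\beta$ is the $R$-submodule generated by the rows of $G_k^\beta$. A linear code $\mathcal{C}\subseteq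 R^n$ has type $(n;t_1,\dots,t_s)$ if $\mathcal{C}\cong\bigoplus_{i=1}^s(R/\langle\gamma^{s-i+1}\rangle)^{t_i}$ as $R$-modules (the $t_i$ are unique); type $(n;k,0,\dots,0)$ means free of rank $k$. *)

From HB Require Import structures.
From mathcomp Require Import all_boot all_order all_algebra.
Set Implicit Arguments. Unset Strict Implicit. Unset Printing Implicit Defensive.
Import GRing.Theory.
Local Open Scope ring_scope.

Section ChainRingCodes.
Variable R : finComUnitRingType.

Definition in_ideal (gamma x : R) : Prop := exists y : R, x = y * gamma.

Definition chain_ring (gamma : R) (s : nat) : Prop :=
  [/\ (0 < s)%N,
      (forall x : R, x \notin GRing.unit <-> in_ideal gamma x),
      gamma ^+ s = 0 & gamma ^+ s.-1 != 0].

(* T = [:: e_0; ...; e_(q-1)] is a set of coset representatives of R/<gamma>,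
   in the order e_0 < ... < e_(q-1), with e_0 = 0 and e_1 = 1. *)
Definition coset_reps (gamma : R) (T : seq R) : Prop :=
  [/\ (1 < size T)%N, T`_0 = 0, T`_1 = 1,
      (forall i j, (i < size T)%N -> (j < size T)%N ->
          in_ideal gamma (T`_i - T`_j) -> i = j)
    & (forall x : R, exists2 i, (i < size T)%N & in_ideal gamma (x - T`_i))].

(* rho_j = sum_i e_(d_i) gamma^i where d_i is the i-th base-q digit of j:
   this is the increasing listing of R for the order of the paper
   (comparison of the gamma-adic digits starting from the highest one). *)
Definition rho_elt (gamma : R) (s : nat) (T : seq R) (j : nat) : R :=
  \sum_(i < s) T`_((j %/ (size T) ^ i) %% size T) * gamma ^+ i.

Definition rho_list (gamma : R) (s : nat) (T : seq R) : seq R :=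
  [seq rho_elt gamma s T j | j <- iota 0 ((size T) ^ s)].

(* increasing listing a_0 gamma < ... < a_(q^(s-1)-1) gamma of <gamma>:
   the elements of R whose 0-th digit is e_0 = 0, i.e. rho_(q j). *)
Definition gamma_list (gamma : R) (s : nat) (T : seq R) : seq R :=
  [seq rho_elt gamma s T (size T * j) | j <- iota 0 ((size T) ^ s.-1)].

(* columns of G_k^alpha (each column a list of length k, top entry first) *)
Fixpoint alpha_cols (rho : seq R) (k : nat) : seq (seq R) :=
  match k with
  | 0 => [:: [::]]
  | k'.+1 => flatten [seq [seq r :: c | c <- alpha_cols rho k'] | r <- rho]
  end.

Fixpoint beta_cols (rho gl : seq R) (k : nat) : seq (seq R) :=
  match k with
  | 0 => [::]
  | k'.+1 => [seq 1 :: c | c <- alpha_cols rho k']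
             ++ flatten [seq [seq a :: c | c <- beta_cols rho gl k'] | a <- gl]
  end.

Definition beta_columns (gamma : R) (s : nat) (T : seq R) (k : nat) :=
  beta_cols (rho_list gamma s T) (gamma_list gamma s T) k.

Definition beta_len (gamma : R) (s : nat) (T : seq R) (k : nat) : nat :=
  size (beta_columns gamma s T k).

Definition G_beta (gamma : R) (s : nat) (T : seq R) (k : nat)
  : 'M[R]_(k, beta_len gamma s T k) :=
  \matrix_(i < k, j < beta_len gamma s T k)
     nth 0 (nth [::] (beta_columns gamma s T k) j) i.

Definition simplex_beta (gamma : R) (s : nat) (T : seq R) (k : nat)
  : 'rV[R]_(beta_len gamma s T k) -> Prop :=
  fun v => exists c : 'rV[R]_k, v = c *m G_beta gamma s T k.

(* a code C in R^n is free of rank k, i.e. C is isomorphic to R^k as an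
   R-module (type (n; k, 0, ..., 0)) *)
Definition free_of_rank (n k : nat) (C : 'rV[R]_n -> Prop) : Prop :=
  exists f : 'rV[R]_k -> 'rV[R]_n,
    [/\ (forall (a : R) (u v : 'rV[R]_k), f (a *: u + v) = a *: f u + f v),
        injective f
      & (forall v, C v <-> exists u, f u = v)].

End ChainRingCodes.

Arguments in_ideal {R}.
Arguments chain_ring {R}.
Arguments coset_reps {R}.
Arguments rho_elt {R}.
Arguments rho_list {R}.
Arguments gamma_list {R}.
Arguments beta_columns {R}.
Arguments beta_len {R}.
Arguments G_beta {R}.
Arguments simplex_beta {R}.
Arguments free_of_rank {R}.

From HB Require Import structures.
From mathcomp Require Import all_boot all_order all_algebra.
Set Implicit Arguments.
Unset Strict Implicit.
Unset Printing Implicit Defensive.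
Local Open Scope ring_scope.
Import GRing.Theory.

(* Every standard basis vector e_i is a column of G_k^beta: e_0 = 1 :: 0 sits in
   the first block (the zero column of G_(k-1)^alpha under a row of ones), and
   e_(i+1) = 0 :: e_i sits in the block headed by a_0 gamma = 0.  Hence
   c |-> c G_k^beta is injective and S_k^beta is free of rank k.  The length
   n_k satisfies n_k = q^(s(k-1)) + q^(s-1) n_(k-1), whose solution is
   q^((s-1)(k-1)) (1 + q + ... + q^(k-1)). *)

Lemma mulmx_inj_delta_cols (R : pzSemiRingType) (k n : nat) (G : 'M[R]_(k, n)) :
  (forall i : 'I_k, exists j : 'I_n, col j G = delta_mx i 0) ->
  injective (fun u : 'rV[R]_k => u *m G).
Proof.
move=> Gdelta u v /= uG_vG; apply/rowP => i.
have [j Gj] := Gdelta i.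
have coord (w : 'rV[R]_k) : (w *m G) 0 j = w 0 i.
  have -> : (w *m G) 0 j = col j (w *m G) 0 0 by rewrite [RHS]mxE.
  by rewrite colE -mulmxA -colE Gj -colE mxE.
by rewrite -coord uG_vG coord.
Qed.

Lemma free_of_rank_mulmx (R : finComUnitRingType) (k n : nat) (G : 'M[R]_(k, n)) :
  injective (fun u : 'rV[R]_k => u *m G) ->
  free_of_rank n k (fun v => exists c : 'rV[R]_k, v = c *m G).
Proof.
move=> G_inj; exists (fun u => u *m G); split => //.
- by move=> a u v; rewrite mulmxDl scalemxAl.
- by move=> v; split=> [[c ->]|[c <-]]; exists c.
Qed.

Lemma sum_expn_divn (q k : nat) : (1 < q)%N ->
  ((q ^ k - 1) %/ (q - 1))%N = (\sum_(i < k) q ^ i)%N.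
Proof. by move=> q_gt1; rewrite !subn1 predn_exp mulKn // -subn1 subn_gt0. Qed.

Section SimplexColumns.
Variable R : finComUnitRingType.
Implicit Types (rho gl : seq R) (k : nat).

Lemma size_alpha_cols rho k : size (alpha_cols rho k) = (size rho ^ k)%N.
Proof. by elim: k => //= k IHk; rewrite (size_allpairs (fun r c => r :: c)) IHk expnS. Qed.

Lemma size_beta_colsS rho gl k :
  size (beta_cols rho gl k.+1) = (size rho ^ k + size gl * size (beta_cols rho gl k))%N.
Proof.
by rewrite /= size_cat size_map size_alpha_cols (size_allpairs (fun a c => a :: c)).
Qed.

Lemma size_beta_cols rho gl (q k : nat) : size rho = (q * size gl)%N ->
  size (beta_cols rho gl k.+1) = (size gl ^ k * \sum_(i < k.+1) q ^ i)%N.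
Proof.
move=> size_rho; elim: k => [|k IHk].
  by rewrite size_beta_colsS big_ord1 muln0.
rewrite size_beta_colsS IHk size_rho [in RHS]big_ord_recr /= mulnA -expnS.
by rewrite expnMn mulnDr addnC [(q ^ _ * _)%N]mulnC.
Qed.

Lemma nseq0_alpha_cols rho k : 0 \in rho -> nseq k 0 \in alpha_cols rho k.
Proof.
move=> rho0; elim: k => [|k IHk] /=; first exact: mem_head.
by apply/allpairsP; exists (0, nseq k 0).
Qed.

Lemma unit_beta_cols rho gl k (i : nat) : 0 \in rho -> 0 \in gl -> (i < k)%N ->
  exists2 c, c \in beta_cols rho gl k & forall l, nth 0 c l = (l == i)%:R.
Proof.
move=> rho0 gl0; elim: k i => // k IHk [|i] ltik /=.
  exists (1 :: nseq k 0); first by rewrite mem_cat map_f ?nseq0_alpha_cols.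
  by case=> [|l] //=; rewrite nth_nseq if_same.
have [c c_in c_unit] := IHk i ltik.
exists (0 :: c); last by case.
by rewrite mem_cat; apply/orP; right; apply/allpairsP; exists (0, c).
Qed.

End SimplexColumns.

Section DigitListings.
Variables (R : finComUnitRingType) (gamma : R) (s : nat) (T : seq R).

Lemma size_rho_list : size (rho_list gamma s T) = (size T ^ s)%N.
Proof. by rewrite size_map size_iota. Qed.

Lemma size_gamma_list : size (gamma_list gamma s T) = (size T ^ s.-1)%N.
Proof. by rewrite size_map size_iota. Qed.

Hypotheses (T0 : T`_0 = 0) (T_gt0 : (0 < size T)%N).

Lemma rho_elt0 : rho_elt gamma s T 0 = 0.
Proof. by rewrite /rho_elt big1 // => i _; rewrite div0n mod0n T0 mul0r. Qed.

Lemma mem0_rho_list : 0 \in rho_list gamma s T.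
Proof. by apply/mapP; exists 0%N; rewrite ?rho_elt0 // mem_iota expn_gt0 T_gt0. Qed.

Lemma mem0_gamma_list : 0 \in gamma_list gamma s T.
Proof. by apply/mapP; exists 0%N; rewrite ?muln0 ?rho_elt0 // mem_iota expn_gt0 T_gt0. Qed.

End DigitListings.

Theorem proposition3p2 (R : finComUnitRingType) (gamma : R) (s : nat) (T : seq R)
  (k : nat) :
  chain_ring gamma s -> coset_reps gamma T -> (1 <= k)%N ->
  let q := size T in
  beta_len gamma s T k = (q ^ ((s - 1) * (k - 1)) * ((q ^ k - 1) %/ (q - 1)))%N /\
  free_of_rank (beta_len gamma s T k) k (simplex_beta gamma s T k).
Proof.
case=> s_gt0 _ _ _ [q_gt1 T0 _ _ _] k_gt0 q.
have q_gt0 : (0 < q)%N by apply: ltn_trans q_gt1.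
split.
  case: k k_gt0 => // k _; rewrite /beta_len /beta_columns (size_beta_cols (q := q)).
    by rewrite size_gamma_list sum_expn_divn // !subn1 -expnM.
  by rewrite size_rho_list size_gamma_list -expnS prednK.
apply/free_of_rank_mulmx/mulmx_inj_delta_cols => i.
have [c c_in c_unit] :=
  unit_beta_cols (mem0_rho_list gamma s T0 q_gt0) (mem0_gamma_list gamma s T0 q_gt0)
    (ltn_ord i).
have c_idx : (index c (beta_columns gamma s T k) < beta_len gamma s T k)%N.
  by rewrite index_mem.
exists (Ordinal c_idx).
by apply/matrixP => l z; rewrite !mxE nth_index // c_unit ord1 eqxx andbT.
Qed.
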